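(* Let $H,K$ be subgroups of $IA_n$ with $H\cap K=\{1\}$ and $K$ normalizing $H$, so that $HK=H\rtimes K\subseteq IA_n$. Suppose that: (1) the semi-direct product is almost-direct, i.e. $[K,H]\subseteq[H,H]$; (2) for every $i\ge1$, the images of $\mathcal A_i\cap H$ and $\mathcal A_i\cap K$ in $\mathcal A_i/\mathcal A_{i+1}$ intersect trivially (equivalently, no element of $H$ and element of $K$ induce the same nonzero derivation of the free Lie ring through the Johnson morphism); (3) the Andreadakis equality holds for $H$ and for $K$: $\Gamma_j(H)=\mathcal A_j\cap H$ and $\Gamma_j(K)=\mathcal A_j\cap K$ for all $j\ge1$. Then the Andreadakis equality holds for $H\rtimes K$: $\Gamma_j(H\rtimes K)=\mathcal A_j\cap (H\rtimes K)$ for all $j\ge1$.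
   Context: $F_n$ is the free group on $n$ generators, $\Gamma_*$ denotes the lower central series ($\Gamma_1(G)=G$, $\Gamma_{k+1}(G)=[G,\Gamma_k(G)]$, $[x,y]=xyx^{-1}y^{-1}$). $IA_n$ is the subgroup of $\mathrm{Aut}(F_n)$ of automorphisms acting trivially on $F_n^{ab}$. The Andreadakis filtration $IA_n=\mathcal A_1\supseteq\mathcal A_2\supseteq\cdots$ is defined by: $\mathcal A_j$ is the subgroup of automorphisms acting trivially on $F_n/\Gamma_{j+1}(F_n)$, i.e. $\sigma(x)x^{-1}\in\Gamma_{j+1}(F_n)$ for all $x\in F_n$. The Johnson morphism sends the class of $\sigma\in\mathcal A_j$ to the degree-$j$ derivation of the free Lie ring $\mathcal L(F_n)=\bigoplus_k\Gamma_k(F_n)/\Gamma_{k+1}(F_n)$ induced by $x\mapsto\sigma(x)x^{-1}$; it is injective on $\bigoplus_j\mathcal A_j/\mathcal A_{j+1}$. *)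

From mathcomp Require Import all_boot.
Set Implicit Arguments. Unset Strict Implicit. Unset Printing Implicit Defensive.

Record gops := GOps {
  gcar :> Type;
  gmul : gcar -> gcar -> gcar;
  ginv : gcar -> gcar;
  gone : gcar }.

Inductive gen (G : gops) (S : G -> Prop) : G -> Prop :=
| gen_in x : S x -> gen S x
| gen_one : gen S (gone G)
| gen_mul x y : gen S x -> gen S y -> gen S (gmul x y)
| gen_inv x : gen S x -> gen S (ginv x).

Definition comm (G : gops) (x y : G) : G :=
  gmul (gmul (gmul x y) (ginv x)) (ginv y).

Definition commsub (G : gops) (A B : G -> Prop) : G -> Prop :=
  gen (fun c => exists x y, A x /\ B y /\ c = comm x y).

(* lcs0 H m = Gamma_{m+1}(H) *)
Fixpoint lcs0 (G : gops) (H : G -> Prop) (m : nat) : G -> Prop :=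
  match m with
  | 0 => H
  | m'.+1 => commsub H (lcs0 H m')
  end.

Definition Gamma (G : gops) (H : G -> Prop) (j : nat) : G -> Prop :=
  lcs0 H j.-1.

Definition letter (n : nat) := ('I_n * bool)%type.  (* (i,false)=x_i, (i,true)=x_i^-1 *)
Definition linv n (x : letter n) : letter n := (x.1, ~~ x.2).

Definition push n (x : letter n) (w : seq (letter n)) : seq (letter n) :=
  match w with
  | y :: w' => if y == linv x then w' else x :: w
  | [::] => [:: x]
  end.

Definition red n (w : seq (letter n)) : seq (letter n) := foldr (@push n) [::] w.

Definition reducedb n (w : seq (letter n)) : bool :=
  sorted (fun x y => y != linv x) w.

Lemma push_reduced n (x : letter n) w : reducedb w -> reducedb (push x w).
Proof.
case: w => [|y w] //= Hw.
case: ifP => Hy; first by move: Hw; rewrite /reducedb /=; case: w => //= z w /andP[].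
by rewrite /reducedb /= Hy.
Qed.

Lemma red_reduced n (w : seq (letter n)) : reducedb (red w).
Proof. by elim: w => [|x w IH] //=; apply: push_reduced. Qed.

Definition FG (n : nat) := {w : seq (letter n) | reducedb w}.

Definition FG_of n (w : seq (letter n)) : FG n := exist _ (red w) (red_reduced w).

Definition fmul n (u v : FG n) : FG n := FG_of (sval u ++ sval v).
Definition finv n (u : FG n) : FG n := FG_of (rev (map (@linv n) (sval u))).
Definition fone n : FG n := FG_of [::].

Definition Fn (n : nat) : gops := GOps (@fmul n) (@finv n) (fone n).

Record aut (n : nat) := Aut {
  afwd : FG n -> FG n;
  abwd : FG n -> FG n;
  afwd_hom : forall x y, afwd (fmul x y) = fmul (afwd x) (afwd y);
  abwd_fwd : forall x, abwd (afwd x) = x;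
  afwd_bwd : forall x, afwd (abwd x) = x }.

Lemma comp_hom n (a b : aut n) x y :
  afwd a (afwd b (fmul x y)) = fmul (afwd a (afwd b x)) (afwd a (afwd b y)).
Proof. by rewrite !afwd_hom. Qed.
Lemma comp_bf n (a b : aut n) x : abwd b (abwd a (afwd a (afwd b x))) = x.
Proof. by rewrite !abwd_fwd. Qed.
Lemma comp_fb n (a b : aut n) x : afwd a (afwd b (abwd b (abwd a x))) = x.
Proof. by rewrite !afwd_bwd. Qed.

Definition amul n (a b : aut n) : aut n :=
  @Aut n (fun x => afwd a (afwd b x)) (fun x => abwd b (abwd a x))
    (comp_hom a b) (comp_bf a b) (comp_fb a b).

Lemma inv_hom n (a : aut n) x y :
  abwd a (fmul x y) = fmul (abwd a x) (abwd a y).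
Proof.
by rewrite -{1}(afwd_bwd a x) -{1}(afwd_bwd a y) -afwd_hom abwd_fwd.
Qed.

Definition ainv n (a : aut n) : aut n :=
  @Aut n (abwd a) (afwd a) (inv_hom a) (afwd_bwd a) (abwd_fwd a).

Definition aone n : aut n :=
  @Aut n id id (fun _ _ => erefl) (fun _ => erefl) (fun _ => erefl).

Definition AutF (n : nat) : gops := GOps (@amul n) (@ainv n) (aone n).

(* Andreadakis filtration: A_j = automorphisms acting trivially on
   F_n / Gamma_{j+1}(F_n), i.e. sigma(x) x^-1 in Gamma_{j+1}(F_n) for all x.
   IA_n = A_1. *)
Definition Andreadakis (n j : nat) (a : aut n) : Prop :=
  forall x : FG n, Gamma (G := Fn n) (fun _ => True) j.+1 (fmul (afwd a x) (finv x)).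

Definition IA (n : nat) (a : aut n) : Prop := @Andreadakis n 1 a.

Definition is_subgroup n (H : aut n -> Prop) : Prop :=
  [/\ H (aone n),
      forall a b, H a -> H b -> H (amul a b)
    & forall a, H a -> H (ainv a)].

Definition prodset n (H K : aut n -> Prop) : aut n -> Prop :=
  fun a => exists h k, H h /\ K k /\ a = amul h k.

Definition andreadakis_eq n (H : aut n -> Prop) : Prop :=
  forall j, 1 <= j -> forall a,
    Gamma (G := AutF n) H j a <-> (@Andreadakis n j a /\ H a).

From mathcomp Require Import all_boot.
From Stdlib Require Import FunctionalExtensionality ProofIrrelevance.
Set Implicit Arguments. Unset Strict Implicit. Unset Printing Implicit Defensive.

(* An automorphism acting trivially modulo Gamma_{p+1} and one acting trivially
   modulo Gamma_{q+1} have a commutator acting trivially modulo Gamma_{p+q+1};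
   this rests on [Gamma_a, Gamma_b] <= Gamma_{a+b}, obtained from the Hall-Witt
   identity.  Hence [A_1, A_j] <= A_{j+1}, and HK <= IA_n gives
   Gamma_j(HK) <= A_j.  Conversely, if hk lies in A_j, condition (2) applied
   to h^-1 and k lifts h and k together through A_1, ..., A_j, so by the
   Andreadakis equalities for H and K, hk lies in Gamma_j(H) Gamma_j(K),
   which is contained in Gamma_j(HK). *)

Section FreeGroupLaws.
Variable n : nat.
Implicit Types (x : letter n) (u w : seq (letter n)).

Definition push_all u w := foldr (@push n) w u.

Lemma linvK x : linv (linv x) = x.
Proof. by case: x => i b; rewrite /linv /= negbK. Qed.

Lemma reduced_behead x w : reducedb (x :: w) -> reducedb w.
Proof. by rewrite /reducedb /=; case: w => //= y w /andP[]. Qed.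

Lemma push_linvK x w : reducedb w -> push x (push (linv x) w) = w.
Proof.
case: w => [|y w] /=; first by rewrite eqxx.
move=> Hw; case: ifP => [/eqP Ey|_]; last by rewrite /= eqxx.
rewrite linvK in Ey; subst y.
by case: w Hw => [|z w] //= /andP[/negbTE ->].
Qed.

Lemma pushK x w : reducedb w -> push (linv x) (push x w) = w.
Proof. by move=> Hw; rewrite -{2}(linvK x) push_linvK. Qed.

Lemma push_all_reduced u w : reducedb w -> reducedb (push_all u w).
Proof. by elim: u => //= x u IH Hw; apply/push_reduced/IH. Qed.

Lemma push_all_cat u v w : push_all (u ++ v) w = push_all u (push_all v w).
Proof. exact: foldr_cat. Qed.

Lemma push_all_red u w : reducedb w -> push_all (red u) w = push_all u w.
Proof.
move=> Hw; elim: u => [|x u IH] //=; rewrite -IH.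
have := red_reduced u; case: (red u) => [|y r] //=.
case: ifP => [/eqP -> Hr|] //=.
by rewrite push_linvK // push_all_reduced // (reduced_behead Hr).
Qed.

Lemma red_id w : reducedb w -> red w = w.
Proof.
elim: w => [|x w IH] //= Hw; rewrite IH; last exact: reduced_behead Hw.
by case: w Hw {IH} => [|y w] //= /andP[/negbTE ->].
Qed.

Lemma red_cat u v : red (u ++ v) = push_all u (red v).
Proof. exact: foldr_cat. Qed.

Lemma push_all_linvK u w :
  reducedb w -> push_all (rev (map (@linv n) u)) (push_all u w) = w.
Proof.
elim: u w => [|x u IH] w Hw //=.
by rewrite rev_cons -cats1 push_all_cat /= pushK ?IH ?push_all_reduced.
Qed.

Lemma FG_eq (a b : FG n) : sval a = sval b -> a = b.
Proof.
case: a b => [a Ha] [b Hb] /= E; subst b.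
by rewrite (bool_irrelevance Ha Hb).
Qed.

End FreeGroupLaws.

Declare Scope group_scope.
Local Open Scope group_scope.
Notation "x * y" := (gmul x y) : group_scope.
Notation "x ^-1" := (ginv x) : group_scope.

Record group_axioms (G : gops) : Prop := GroupAxioms {
  group_mulgA : forall x y z : G, x * (y * z) = x * y * z;
  group_mul1g : forall x : G, gone G * x = x;
  group_mulVg : forall x : G, x^-1 * x = gone G;
  group_mulgV : forall x : G, x * x^-1 = gone G }.

Lemma Fn_group n : group_axioms (Fn n).
Proof.
split=> /=.
- move=> [a Ha] [b Hb] [c Hc]; apply: FG_eq => /=.
  rewrite !red_cat (red_id Hc) (red_id Hb) red_id ?push_all_reduced //.
  by rewrite -push_all_cat -[in RHS](red_id Hb) -red_cat push_all_red.
- by move=> [a Ha]; apply: FG_eq; rewrite /= red_id.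
- move=> [a Ha]; apply: FG_eq => /=.
  rewrite red_cat push_all_red ?red_reduced // (red_id Ha).
  by rewrite -{2}(red_id Ha) push_all_linvK.
- move=> [a Ha]; apply: FG_eq => /=.
  rewrite red_cat (red_id (red_reduced _)).
  have := @push_all_linvK n (rev (map (@linv n) a)) [::] isT.
  by rewrite map_rev revK (mapK (@linvK n)).
Qed.

Section GroupTheory.
Variable G : gops.
Hypothesis G_group : group_axioms G.
Implicit Types (x y z u v w : G) (S T : G -> Prop).

Let mulgA := group_mulgA G_group.
Let mul1g := group_mul1g G_group.
Let mulVg := group_mulVg G_group.
Let mulgV := group_mulgV G_group.

Lemma mulgA_r x y z : x * y * z = x * (y * z).
Proof. by rewrite mulgA. Qed.

Lemma mulKg x y : x^-1 * (x * y) = y.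
Proof. by rewrite mulgA mulVg mul1g. Qed.

Lemma mulKVg x y : x * (x^-1 * y) = y.
Proof. by rewrite mulgA mulgV mul1g. Qed.

Lemma mulg1 x : x * gone G = x.
Proof. by rewrite -(mulVg x) mulKVg. Qed.

Lemma mulgVK x y : x * y^-1 * y = x.
Proof. by rewrite -mulgA mulVg mulg1. Qed.

Lemma invg_uniq x y : x * y = gone G -> y = x^-1.
Proof. by move=> E; rewrite -(mulg1 x^-1) -E mulKg. Qed.

Lemma invgK x : x^-1^-1 = x.
Proof. by apply/esym/invg_uniq; rewrite mulVg. Qed.

Lemma invgM x y : (x * y)^-1 = y^-1 * x^-1.
Proof. by apply/esym/invg_uniq; rewrite mulgA_r mulKVg mulgV. Qed.

Lemma invg1 : (gone G)^-1 = gone G.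
Proof. by apply/esym/invg_uniq; rewrite mul1g. Qed.

Ltac gsimpl := repeat rewrite ?mulgA_r ?invgM ?invgK ?invg1 ?mulKg ?mulKVg
                              ?mulgV ?mulVg ?mul1g ?mulg1.

Lemma commV x y : (comm x y)^-1 = comm y x.
Proof. by rewrite /comm; gsimpl. Qed.

Lemma commMl x y z : comm (x * y) z = x * comm y z * x^-1 * comm x z.
Proof. by rewrite /comm; gsimpl. Qed.

Lemma commVl x z : comm x^-1 z = x^-1 * (comm x z)^-1 * x.
Proof. by rewrite /comm; gsimpl. Qed.

Lemma comm_conj x y z :
  x * comm y z * x^-1 = comm (x * y * x^-1) (x * z * x^-1).
Proof. by rewrite /comm; gsimpl. Qed.

Definition group_closed T :=
  [/\ T (gone G), forall x y, T x -> T y -> T (x * y) & forall x, T x -> T x^-1].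

Lemma gen_mono S T x : (forall y, S y -> T y) -> gen S x -> gen T x.
Proof.
by move=> ST; elim=> *; [apply/gen_in/ST|apply: gen_one|apply: gen_mul|apply: gen_inv].
Qed.

Lemma gen_min S T x : group_closed T -> (forall y, S y -> T y) -> gen S x -> T x.
Proof. by case=> T1 TM TV ST; elim=> *; auto. Qed.

Lemma lcs0_closed S m : group_closed S -> group_closed (lcs0 S m).
Proof.
by case: m => [//|m] _; split=> *; [apply: gen_one|apply: gen_mul|apply: gen_inv].
Qed.

Lemma lcs0_min S T m x : group_closed T -> (forall y, S y -> T y) -> lcs0 S m x -> T x.
Proof.
move=> [T1 TM TV] ST; elim: m x => [|m IH] x /=; first exact: ST.
by apply: gen_min => // _ [a [b [Sa [Lb ->]]]]; rewrite /comm; auto.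
Qed.

Lemma lcs0_mono S T m x : (forall y, S y -> T y) -> lcs0 S m x -> lcs0 T m x.
Proof.
move=> ST; elim: m x => [|m IH] x /=; first exact: ST.
by apply: gen_mono => _ [a [b [Sa [Lb ->]]]]; exists a, b; auto.
Qed.

(* [lcsT m] is Gamma_{m+1}(G); with this shift, [Andreadakis j a] below is
   literally [trivial_mod_lcs (afwd a) j] in the free group. *)
Local Notation lcsT := (lcs0 (fun _ : G => True)).

Lemma lcsT_closed m : group_closed (lcsT m).
Proof. exact: lcs0_closed. Qed.

Lemma lcsT1 m : lcsT m (gone G).
Proof. by case: (lcsT_closed m). Qed.

Lemma lcsTM m x y : lcsT m x -> lcsT m y -> lcsT m (x * y).
Proof. by case: (lcsT_closed m) => _ + _; apply. Qed.

Lemma lcsTV m x : lcsT m x -> lcsT m x^-1.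
Proof. by case: (lcsT_closed m) => _ _; apply. Qed.

Lemma lcsTVE m x : lcsT m x^-1 -> lcsT m x.
Proof. by move/lcsTV; rewrite invgK. Qed.

Lemma lcsT_commr m x y : lcsT m y -> lcsT m.+1 (comm x y).
Proof. by move=> Ly; apply: gen_in; exists x, y. Qed.

Lemma lcsT_comml m x y : lcsT m x -> lcsT m.+1 (comm x y).
Proof. by move=> Lx; apply: lcsTVE; rewrite commV; apply: lcsT_commr. Qed.

Lemma lcsT_conj m x y : lcsT m y -> lcsT m (x * y * x^-1).
Proof.
elim: m y => [//|m IH] y /=; elim=> [_ [a [b [_ [Lb ->]]]]|||].
- by rewrite comm_conj; apply/lcsT_commr/IH.
- by rewrite mulg1 mulgV; apply: gen_one.
- move=> a b _ La _ Lb.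
  have -> : x * (a * b) * x^-1 = (x * a * x^-1) * (x * b * x^-1) by gsimpl.
  exact: gen_mul.
- move=> a _ La.
  have -> : x * a^-1 * x^-1 = (x * a * x^-1)^-1 by gsimpl.
  exact: gen_inv.
Qed.

Lemma lcsT_succ m y : lcsT m.+1 y -> lcsT m y.
Proof.
elim: m y => [//|m IH] y /=.
by apply: gen_mono => _ [a [b [_ [Lb ->]]]]; exists a, b; auto.
Qed.

Lemma lcsT_le m k y : m <= k -> lcsT k y -> lcsT m y.
Proof.
move=> /subnK <-; elim: (k - m) y => [|d IH] y //=.
by move=> Ly; apply/IH/lcsT_succ.
Qed.

Lemma hall_witt x y z :
  x * comm (comm x^-1 y) z * x^-1 =
  (z * comm (comm z^-1 x) y * z^-1 * (y * comm (comm y^-1 z) x * y^-1))^-1.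
Proof. by rewrite /comm; gsimpl. Qed.

Lemma lcsT_three_subgroups N u v y :
  lcsT N (comm (comm y^-1 u^-1) v) -> lcsT N (comm (comm v^-1 y) u^-1) ->
  lcsT N (comm (comm u v) y).
Proof.
move=> L1 L2.
have /(lcsT_conj u) : lcsT N (u^-1 * comm (comm u^-1^-1 v) y * u^-1^-1).
  by rewrite hall_witt; apply/lcsTV/lcsTM; apply: lcsT_conj.
by rewrite /comm invgK; gsimpl.
Qed.

Lemma lcsT_comm a b x y : lcsT a x -> lcsT b y -> lcsT (a + b).+1 (comm x y).
Proof.
elim: a b x y => [|a IH] b x y; first by rewrite add0n => _; apply: lcsT_commr.
move=> Lx; elim: Lx y
  => [_ [u [v [_ [Lv ->]]]] y Ly|y _|g1 g2 _ L1 _ L2 y Ly|g _ L1 y Ly].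
- apply: lcsT_three_subgroups.
  + apply: lcsTVE; rewrite commV.
    by have := IH _ _ _ Lv (lcsT_comml u^-1 (lcsTV Ly)); rewrite addnS.
  + by apply: lcsT_comml; have := IH _ _ _ (lcsTV Lv) Ly.
- by rewrite /comm mul1g invg1 mulg1 mulgV; apply: lcsT1.
- by rewrite commMl; apply: lcsTM; [apply: lcsT_conj; apply: L2|apply: L1].
- by rewrite commVl; have := lcsT_conj g^-1 (lcsTV (L1 _ Ly)); rewrite invgK.
Qed.

Definition trivial_mod_lcs (f : G -> G) p := forall x, lcsT p (f x * x^-1).

Lemma trivial_mod_lcs_id p : trivial_mod_lcs id p.
Proof. by move=> x; rewrite mulgV; apply: lcsT1. Qed.

Lemma trivial_mod_lcs_comp f g p :
  trivial_mod_lcs f p -> trivial_mod_lcs g p -> trivial_mod_lcs (f \o g) p.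
Proof.
move=> Tf Tg x; have -> : f (g x) * x^-1 = f (g x) * (g x)^-1 * (g x * x^-1) by gsimpl.
exact: lcsTM.
Qed.

Lemma trivial_mod_lcs_cancel f g p :
  cancel g f -> trivial_mod_lcs f p -> trivial_mod_lcs g p.
Proof.
move=> gK Tf x; have -> : g x * x^-1 = (f (g x) * (g x)^-1)^-1 by rewrite gK; gsimpl.
exact: lcsTV.
Qed.

Lemma trivial_mod_lcs_le f p q : p <= q -> trivial_mod_lcs f q -> trivial_mod_lcs f p.
Proof. by move=> le_pq Tf x; apply: lcsT_le le_pq (Tf x). Qed.

(* With zeta = f z z^-1 and om = f w w^-1, this bounds f [z, w] [z, w]^-1. *)
Lemma lcsT_comm_shift p q zeta z om w :
  lcsT p zeta -> lcsT q w -> lcsT (p + q) om ->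
  lcsT (p + q).+1 (comm (zeta * z) (om * w) * (comm z w)^-1).
Proof.
move=> Lzeta Lw Lom.
have -> : comm (zeta * z) (om * w) * (comm z w)^-1 =
  comm (zeta * z) om * comm om (comm (zeta * z) w) *
  (comm zeta (comm z w) * (comm z w * comm zeta w * (comm z w)^-1)).
  by rewrite /comm; gsimpl.
apply: lcsTM; first by apply: lcsTM; [apply: lcsT_commr|apply: lcsT_comml].
apply: lcsTM; last exact/lcsT_conj/lcsT_comm.
apply: (@lcsT_le _ (p + q.+1).+1); first by rewrite addnS ltnW.
exact/lcsT_comm/lcsT_commr.
Qed.

Section Endomorphism.
Variable f : G -> G.
Hypothesis fM : forall x y, f (x * y) = f x * f y.

Lemma morph1 : f (gone G) = gone G.
Proof. by rewrite -[LHS](mulKg (f (gone G))) -fM mul1g mulVg. Qed.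

Lemma morphV x : f x^-1 = (f x)^-1.
Proof. by apply: invg_uniq; rewrite -fM mulgV morph1. Qed.

Lemma morphR x y : f (comm x y) = comm (f x) (f y).
Proof. by rewrite /comm !fM !morphV. Qed.

Lemma trivial_mod_lcs_lcs p q y :
  trivial_mod_lcs f p -> lcsT q y -> lcsT (p + q) (f y * y^-1).
Proof.
move=> Tf; elim: q y => [|q IH] y; first by rewrite addn0.
rewrite addnS; elim=> [_ [z [w [_ [Lw ->]]]]|||].
- rewrite morphR -(mulgVK (f z) z) -(mulgVK (f w) w).
  exact: lcsT_comm_shift (Tf z) Lw (IH _ Lw).
- by rewrite morph1 invg1 mulg1; apply: lcsT1.
- move=> a b _ La _ Lb.
  have -> : f (a * b) * (a * b)^-1 = f a * (f b * b^-1) * (f a)^-1 * (f a * a^-1).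
    by rewrite fM; gsimpl.
  exact/lcsTM/La/lcsT_conj.
- move=> a _ La.
  have -> : f a^-1 * a^-1^-1 = (f a)^-1 * (f a * a^-1)^-1 * (f a)^-1^-1.
    by rewrite morphV; gsimpl.
  exact/lcsT_conj/lcsTV.
Qed.

End Endomorphism.

Lemma trivial_mod_lcs_commute f g p q :
  (forall x y, f (x * y) = f x * f y) -> (forall x y, g (x * y) = g x * g y) ->
  trivial_mod_lcs f p -> trivial_mod_lcs g q ->
  forall z, lcsT (p + q) (f (g z) * (g (f z))^-1).
Proof.
move=> fM gM Tf Tg z; set al := f z * z^-1; set be := g z * z^-1.
have Lal : lcsT p al := Tf z; have Lbe : lcsT q be := Tg z.
rewrite -(mulgVK (f z) z) -(mulgVK (g z) z) fM gM -/al -/be.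
rewrite -(mulgVK (f z) z) -(mulgVK (g z) z) -/al -/be.
have -> : f be * (al * z) * (g al * (be * z))^-1 =
  f be * be^-1 * comm be al * (g al * al^-1)^-1 by rewrite /comm; gsimpl.
apply: lcsTM; first apply: lcsTM.
- exact (trivial_mod_lcs_lcs fM Tf Lbe).
- by apply: (@lcsT_le _ (q + p).+1); [rewrite addnC leqnSn|exact: lcsT_comm Lbe Lal].
- by apply: lcsTV; rewrite addnC; exact (trivial_mod_lcs_lcs gM Tg Lal).
Qed.

End GroupTheory.

Section AndreadakisFiltration.
Variable n : nat.
Implicit Types (a b : aut n) (S : aut n -> Prop).

Lemma aut_eq a b :
  (forall x, afwd a x = afwd b x) -> (forall x, abwd a x = abwd b x) -> a = b.
Proof.
case: a b => [f g fM gf fg] [f' g' fM' gf' fg'] /= /functional_extensionality E1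
  /functional_extensionality E2.
by subst f' g'; f_equal; apply: proof_irrelevance.
Qed.

Lemma Andreadakis_closed j : group_closed (G := AutF n) (Andreadakis j).
Proof.
split=> [|a b Aa Ab|a Aa].
- exact (trivial_mod_lcs_id (Fn_group n) j).
- exact (trivial_mod_lcs_comp (Fn_group n) Aa Ab).
- exact (trivial_mod_lcs_cancel (Fn_group n) (afwd_bwd a) Aa).
Qed.

Lemma Andreadakis_le i j a : i <= j -> Andreadakis j a -> Andreadakis i a.
Proof. by move=> le_ij; exact (trivial_mod_lcs_le (G := Fn n) (f := afwd a) le_ij). Qed.

Lemma Andreadakis_comm p q a b :
  Andreadakis p a -> Andreadakis q b -> Andreadakis (p + q) (comm (G := AutF n) a b).
Proof.
move=> Aa Ab x.
have := trivial_mod_lcs_commute (Fn_group n) (afwd_hom a) (afwd_hom b) Aa Ab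
  (abwd a (abwd b x)).
by rewrite /= !afwd_bwd.
Qed.

Lemma lcs0_Andreadakis S m a :
  (forall b, S b -> IA b) -> lcs0 (G := AutF n) S m a -> Andreadakis m.+1 a.
Proof.
move=> S_IA; elim: m a => [|m IH] a; first exact: S_IA.
apply: gen_min; first exact: Andreadakis_closed.
move=> _ [b [c [Sb [Lc ->]]]].
by rewrite -add1n; apply: Andreadakis_comm; [apply: S_IA|apply: IH].
Qed.

End AndreadakisFiltration.

Section ProductOfSubgroups.
Variables (n : nat) (H K : aut n -> Prop).
Hypotheses (H_sub : is_subgroup H) (K_sub : is_subgroup K).

Lemma prodset_l h : H h -> prodset H K h.
Proof.
move=> Hh; exists h, (aone n); case: K_sub => K1 _ _.
by do 2!split=> //; apply: aut_eq.
Qed.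

Lemma prodset_r k : K k -> prodset H K k.
Proof.
move=> Kk; exists (aone n), k; case: H_sub => H1 _ _.
by do 2!split=> //; apply: aut_eq.
Qed.

Lemma prodset_IA : (forall h, H h -> IA h) -> (forall k, K k -> IA k) ->
  forall a, prodset H K a -> IA a.
Proof.
move=> H_IA K_IA _ [h [k [Hh [Kk ->]]]].
by case: (Andreadakis_closed n 1) => _ AM _; apply: AM; [apply: H_IA|apply: K_IA].
Qed.

Lemma prodset_closed : (forall k h, K k -> H h -> H (amul (amul k h) (ainv k))) ->
  group_closed (G := AutF n) (prodset H K).
Proof.
case: H_sub K_sub => [H1 HM HV] [K1 KM KV] Hnorm; split.
- exact: prodset_l.
- move=> _ _ [h [k [Hh [Kk ->]]]] [h' [k' [Hh' [Kk' ->]]]].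
  exists (amul h (amul (amul k h') (ainv k))), (amul k k').
  split; first by apply: HM => //; apply: Hnorm.
  by split; [apply: KM|apply: aut_eq => x /=; rewrite ?abwd_fwd ?afwd_bwd].
- move=> _ [h [k [Hh [Kk ->]]]].
  exists (amul (amul (ainv k) (ainv h)) (ainv (ainv k))), (ainv k).
  split; first by apply: Hnorm; [apply: KV|apply: HV].
  by split; [apply: KV|apply: aut_eq => x /=; rewrite ?abwd_fwd ?afwd_bwd].
Qed.

Lemma Andreadakis_factors m h k :
  (forall h, H h -> IA h) -> (forall k, K k -> IA k) ->
  (forall i, 1 <= i -> forall h k, H h -> K k ->
     Andreadakis i h -> Andreadakis i k ->
     Andreadakis i.+1 (amul (ainv h) k) -> Andreadakis i.+1 h) ->
  H h -> K k -> Andreadakis m.+1 (amul h k) ->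
  Andreadakis m.+1 h /\ Andreadakis m.+1 k.
Proof.
move=> H_IA K_IA separated Hh Kk Ahk.
have ainvK a : ainv (ainv a) = a by apply: aut_eq.
suff: forall i, i <= m.+1 -> Andreadakis i h /\ Andreadakis i k by apply.
elim=> [|[|i] IH] le_i.
- by split=> ?.
- by split; [apply: H_IA|apply: K_IA].
have [Ah Ak] := IH (ltnW le_i).
have [_ AM AV] := Andreadakis_closed n i.+2.
have Ah' : Andreadakis i.+2 (ainv h).
  apply: (separated i.+1 isT (ainv h) k) => //; first by case: H_sub => _ _; apply.
  - by case: (Andreadakis_closed n i.+1) => _ _; apply.
  - by rewrite ainvK; apply: Andreadakis_le le_i Ahk.
split; first by rewrite -[h]ainvK; apply: AV.
have -> : k = amul (ainv h) (amul h k) by apply: aut_eq => x /=; rewrite ?abwd_fwd.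
by apply: AM => //; apply: Andreadakis_le le_i Ahk.
Qed.

End ProductOfSubgroups.

Theorem mainTheorem6 (n : nat) (H K : aut n -> Prop) :
  is_subgroup H -> is_subgroup K ->
  (forall a, H a -> IA a) -> (forall a, K a -> IA a) ->
  (* H cap K = 1 *)
  (forall a, H a -> K a -> a = aone n) ->
  (* K normalizes H *)
  (forall k h, K k -> H h -> H (amul (amul k h) (ainv k))) ->
  (* (1) almost-direct: [K,H] subset [H,H] *)
  (forall a, commsub (G := AutF n) K H a -> Gamma (G := AutF n) H 2 a) ->
  (* (2) images of A_i cap H and A_i cap K in A_i/A_{i+1} intersect trivially *)
  (forall i, 1 <= i -> forall h k, H h -> K k ->
     @Andreadakis n i h -> @Andreadakis n i k ->
     @Andreadakis n i.+1 (amul (ainv h) k) -> @Andreadakis n i.+1 h) ->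
  (* (3) Andreadakis equality for H and K *)
  andreadakis_eq H -> andreadakis_eq K ->
  andreadakis_eq (prodset H K).
Proof.
move=> H_sub K_sub H_IA K_IA _ normal _ separated H_eq K_eq j j_gt0 a.
have HK_closed := prodset_closed H_sub K_sub normal.
rewrite /Gamma -(prednK j_gt0) /=; set m := j.-1.
split=> [Ga | [Aa [h [k [Hh [Kk Ea]]]]]].
  split; last exact: lcs0_min HK_closed _ Ga.
  exact: lcs0_Andreadakis (prodset_IA H_IA K_IA) Ga.
subst a.
have [Ah Ak] := Andreadakis_factors H_sub H_IA K_IA separated Hh Kk Aa.
have [_ LM _] := lcs0_closed m HK_closed.
apply: LM; apply: lcs0_mono.
- exact: prodset_l.
- by apply/(H_eq m.+1 isT).
- exact: prodset_r.
- by apply/(K_eq m.+1 isT).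
Qed.
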